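(* Let $q$ be a prime power, $\mu$ a positive integer, and $S$ a minimal $(1,\mu)$-saturating set in $PG(2,q)$. Then (i) $\mu\le (q+1)\binom{q}{2}$; (ii) $|S|\le q+\mu+1$ if $\mu\le q+2$, and $|S|\le \min\{q+\mu,\;q^2+q\}$ if $\mu\ge q+3$.
   Context: $PG(2,q)$ is the projective plane over $\mathbb{F}_q$. For a point set $S$, a secant of $S$ is a line $\ell$ with $|\ell\cap S|\ge2$, counted with multiplicity $\binom{|\ell\cap S|}{2}$. A set $S$ of points of $PG(2,q)$ is $(1,\mu)$-saturating if (M1) $S$ spans $PG(2,q)$, (M2) $S\neq PG(2,q)$, and (M3) every point $Q\notin S$ lies on secants of $S$ whose multiplicities sum to at least $\mu$. A $(1,\mu)$-saturating set of size $n$ is minimal if it does not contain a $(1,\mu)$-saturating set of size $n-1$. *)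

From HB Require Import structures.
From mathcomp Require Import all_boot all_order all_algebra.
Set Implicit Arguments. Unset Strict Implicit. Unset Printing Implicit Defensive.
Import GRing.Theory.
Local Open Scope ring_scope.

(* PG(2,q) over a finite field F (q = #|F|).  A projective point is
   represented by its unique normalized homogeneous coordinate vector in
   F^3: nonzero, with first nonzero coordinate equal to 1. Lines are
   represented by normalized dual coordinate vectors. *)

Definition normalized (F : fieldType) (v : 'rV[F]_3) : bool :=
  (v 0 0 == 1) ||
  ((v 0 0 == 0) && ((v 0 1 == 1) || ((v 0 1 == 0) && (v 0 2 == 1)))).

Notation pg_point F := {v : 'rV[F]_3 | normalized v}.
Notation pg_line F := {v : 'rV[F]_3 | normalized v}.

Definition incident (F : fieldType) (P : pg_point F) (l : pg_line F) : bool :=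
  \sum_(i < 3) (val P) 0 i * (val l) 0 i == 0.

Section PG.
Variable F : finFieldType.

Definition meet_card (S : {set pg_point F}) (l : pg_line F) : nat :=
  #|[set P in S | incident P l]|.

Definition secant_mult (S : {set pg_point F}) (Q : pg_point F) : nat :=
  (\sum_(l : pg_line F | incident Q l) 'C(meet_card S l, 2))%N.

Definition spans_plane (S : {set pg_point F}) : bool :=
  row_full (\sum_(P in S) <<val P>>)%MS.

Definition saturating (mu : nat) (S : {set pg_point F}) : Prop :=
  [/\ spans_plane S, S != [set: pg_point F] &
      forall Q : pg_point F, Q \notin S -> (mu <= secant_mult S Q)%N].

Definition minimal_saturating (mu : nat) (S : {set pg_point F}) : Prop :=
  saturating mu S /\
  forall T : {set pg_point F}, T \subset S -> #|T| = #|S|.-1 ->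
    ~ saturating mu T.

End PG.

From mathcomp Require Import all_boot all_order all_algebra.
From mathcomp Require Import ring zify.
Set Implicit Arguments. Unset Strict Implicit. Unset Printing Implicit Defensive.
Import GRing.Theory.

(* Every line of PG(2,q) carries at most q+1 points and every point lies on at
   most q+1 lines.  Counting the points of a set T along the lines through a
   point R gives |T| <= sum_l |l ∩ T| <= sum_l (C(|l ∩ T|,2) + 1), so R lies on
   secants of total multiplicity at least |T| - q - 1; once |T| >= 2q+3 some
   line through R meets T in k >= 3 points, where k <= C(k,2), and the bound
   improves to |T| - q.  If a minimal (1,mu)-saturating set S were larger than
   the claimed bound, deleting any point of S would thus leave a set which
   still spans the plane (it does not fit on a line) and still
   (1,mu)-saturates it.  Bound (i) holds because a line through a point
   outside S meets S in at most q points, and |S| <= q^2+q because S is a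
   proper subset of the q^2+q+1 points of the plane. *)

Local Open Scope ring_scope.

Lemma ord3_others (j : 'I_3) : exists i k : 'I_3, forall m, m != j -> m = i \/ m = k.
Proof.
have ord3 (m : 'I_3) : [\/ m = 0, m = 1 | m = 2].
  by case: m => [[|[|[|m]]] Hm] //; [constructor 1|constructor 2|constructor 3];
    apply: val_inj.
case: (ord3 j) => ->; [exists 1, 2 | exists 0, 2 | exists 0, 1] => m;
  by case: (ord3 m) => ->; rewrite ?eqxx //; auto.
Qed.

Section Plane.
Variable F : finFieldType.
Notation pt := {v : 'rV[F]_3 | normalized v}.

Lemma normalized_ne0 (v : pt) : val v != 0.
Proof.
case: v => v /= v_norm; apply: contraTneq v_norm => ->.
by rewrite /normalized !mxE eqxx /= (eq_sym 0 1) oner_eq0.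
Qed.

Lemma normalized_scale_exists (w : 'rV[F]_3) : w != 0 -> exists c, normalized (c *: w).
Proof.
move=> w_neq0; rewrite /normalized.
have [w0|w0] := eqVneq (w 0 0) 0; last by exists (w 0 0)^-1; rewrite mxE mulVf ?eqxx.
have [w1|w1] := eqVneq (w 0 1) 0; last first.
  by exists (w 0 1)^-1; rewrite !mxE w0 mulr0 mulVf ?eqxx ?orbT.
have [w2|w2] := eqVneq (w 0 2) 0; last first.
  by exists (w 0 2)^-1; rewrite !mxE w0 w1 mulr0 mulVf ?eqxx ?orbT.
case/eqP: w_neq0; apply/rowP => m; rewrite mxE.
by case: m => [[|[|[|m]]] Hm] //; [rewrite -w0|rewrite -w1|rewrite -w2];
  congr (w _ _); apply: val_inj.
Qed.

(* The first nonzero coordinate of both vectors is 1, which forces [c = 1]. *)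
Lemma normalized_scale_eq (u v : pt) (c : F) : val u = c *: val v -> u = v.
Proof.
move=> uv; have uvE m : val u 0 m = c * val v 0 m by rewrite uv mxE.
suff c1 : c = 1 by apply: val_inj; rewrite uv c1 scale1r.
have one0 : (0 == 1 :> F) = false by rewrite eq_sym oner_eq0.
move: (valP v) (valP u); rewrite /normalized !uvE.
case/orP=> [/eqP->|/andP[/eqP-> v12]].
  rewrite mulr1; case/orP => [/eqP//|/andP[/eqP c0]].
  by rewrite c0 !mul0r one0 eqxx.
rewrite mulr0 eqxx /= one0 /=.
case/orP: v12 => [/eqP->|/andP[/eqP-> /eqP->]].
  rewrite mulr1; case/orP => [/eqP//|/andP[/eqP c0]].
  by rewrite c0 !mul0r one0.
by rewrite !mulr0 mulr1 eqxx one0 /= => /eqP.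
Qed.

Lemma incident_sym (P l : pt) : incident P l = incident l P.
Proof. by rewrite /incident; under eq_bigr do rewrite mulrC. Qed.

Lemma incidentE (P l : pt) : incident P l = ((val P *m (val l)^T) 0 0 == 0).
Proof. by rewrite /incident mxE; under [in RHS]eq_bigr do rewrite mxE. Qed.

Lemma dot_eq0_proportional (u v l : 'rV[F]_3) (j : 'I_3) (c : F) :
  l 0 j != 0 -> \sum_(i < 3) u 0 i * l 0 i = 0 -> \sum_(i < 3) v 0 i * l 0 i = 0 ->
  (forall m, m != j -> u 0 m = c * v 0 m) -> u = c *: v.
Proof.
move=> lj_neq0 ul vl uv; apply/rowP => m; rewrite mxE.
have [->|/uv //] := eqVneq m j.
have : \sum_(i < 3) (u 0 i - c * v 0 i) * l 0 i = 0.
  under eq_bigr do rewrite mulrBl -mulrA.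
  by rewrite sumrB -mulr_sumr ul vl mulr0 subrr.
rewrite (bigD1 j) //= big1 => [|i /uv ->]; last by rewrite subrr mul0r.
by move/eqP; rewrite addr0 mulf_eq0 (negbTE lj_neq0) orbF subr_eq0 => /eqP.
Qed.

Lemma card_points_on_line (l : pt) : (#|[set P : pt | incident P l]| <= #|F|.+1)%N.
Proof.
have /matrix0Pn[r [j]] := normalized_ne0 l; rewrite (ord1 r) => lj_neq0.
have [i [k others]] := ord3_others j.
set A := [set P : pt | incident P l].
have onA (P : pt) : P \in A -> \sum_(m < 3) val P 0 m * val l 0 m = 0.
  by rewrite inE => /eqP.
have same (P P' : pt) c : P \in A -> P' \in A ->
    val P 0 i = c * val P' 0 i -> val P 0 k = c * val P' 0 k -> P = P'.
  move=> /onA PA /onA P'A Pi Pk; apply: (@normalized_scale_eq _ _ c).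
  by apply: dot_eq0_proportional lj_neq0 PA P'A _ => m /others [] ->.
(* a point of [l] is recorded by the ratio of its [k]-th to its [i]-th coordinate *)
pose ratio (P : pt) : option F :=
  if val P 0 i == 0 then None else Some (val P 0 k / val P 0 i).
have ratio_inj : {in A &, injective ratio}.
  move=> P P' PA P'A; rewrite /ratio.
  case: eqVneq => [Pi0|Pi_neq0]; case: eqVneq => [P'i0|P'i_neq0] //.
    move=> _; have P'k_neq0 : val P' 0 k != 0.
      apply: contra (normalized_ne0 P') => /eqP P'k0; apply/eqP.
      rewrite -(scale0r (val P')).
      by apply: dot_eq0_proportional lj_neq0 (onA _ P'A) (onA _ P'A) _ =>
        m /others [] ->; rewrite mul0r.
    by apply: (same P P' (val P 0 k / val P' 0 k)); rewrite ?Pi0 ?P'i0 ?mulr0 ?divfK.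
  case=> ratioE; apply: (same P P' (val P 0 i / val P' 0 i)); rewrite ?divfK //.
  by rewrite -[LHS](divfK Pi_neq0) ratioE; field.
rewrite -(card_in_imset ratio_inj) -card_option; exact: max_card.
Qed.

Lemma card_lines_through (Q : pt) : (#|[set l : pt | incident Q l]| <= #|F|.+1)%N.
Proof.
rewrite (eq_card (B := [set l : pt | incident l Q])) ?card_points_on_line //.
by move=> l; rewrite !inE incident_sym.
Qed.

Lemma rank_lt3_line m (A : 'M[F]_(m, 3)) : (\rank A < 3)%N ->
  exists l : pt, A *m (val l)^T = 0.
Proof.
move=> rkA; set C := cokermx A.
have [r0 [j Cj]] : exists r j, C r j != 0.
  by apply/matrix0Pn; rewrite cokermx_eq0 /row_full ltn_eqF.
have [c Hc] : exists c, normalized (c *: (col j C)^T).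
  by apply: normalized_scale_exists; apply/matrix0Pn; exists 0, r0; rewrite 2!mxE.
exists (exist (@normalized F) _ Hc); apply/matrixP => r z; rewrite (ord1 z) !mxE /=.
transitivity (c * (A *m C) r j); last by rewrite mulmx_coker mxE mulr0.
by rewrite mxE mulr_sumr; apply: eq_bigr => k _; rewrite !mxE mulrCA.
Qed.

Lemma exists_line_through2 (P R : pt) : exists l : pt, incident P l && incident R l.
Proof.
have [l] : exists l : pt, col_mx (val P) (val R) *m (val l)^T = 0.
  by apply: rank_lt3_line; apply: leq_ltn_trans (rank_leq_row _) _.
rewrite mul_col_mx => /eqP; rewrite col_mx_eq0 => /andP[/eqP Pl /eqP Rl].
by exists l; rewrite !incidentE Pl Rl mxE eqxx.
Qed.

Lemma collinear_of_not_spans (T : {set pt}) : ~~ spans_plane T ->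
  exists l : pt, forall P, P \in T -> incident P l.
Proof.
rewrite /spans_plane /row_full => not_full.
set M := (\sum_(P in T) <<val P>>)%MS.
have [l Ml] : exists l : pt, M *m (val l)^T = 0.
  by apply: rank_lt3_line; rewrite ltn_neqAle not_full rank_leq_col.
exists l => P PT; have : (val P <= M)%MS by apply: (sumsmx_sup P); rewrite ?genmxE.
by rewrite incidentE => /submxP[D ->]; rewrite -mulmxA Ml mulmx0 mxE.
Qed.

Local Open Scope nat_scope.

Lemma meet_card_le (T : {set pt}) (Q l : pt) :
  Q \notin T -> incident Q l -> meet_card T l <= #|F|.
Proof.
move=> QT Ql; rewrite -ltnS; apply: leq_trans (card_points_on_line l).
apply: proper_card; apply/properP; split.
  by apply/subsetP => P; rewrite !inE => /andP[].
by exists Q; rewrite !inE ?Ql ?(negbTE QT).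
Qed.

Lemma card_le_sum_meet_card (T : {set pt}) (Q : pt) :
  #|T| <= \sum_(l | incident Q l) meet_card T l.
Proof.
have meetE l : meet_card T l = \sum_(P in T) incident P l.
  rewrite /meet_card -sum1_card big_mkcond [RHS]big_mkcond; apply: eq_bigr => P _.
  by rewrite inE; case: (P \in T); case: incident.
under eq_bigr do rewrite meetE.
rewrite exchange_big /= -sum1_card; apply: leq_sum => P _.
have [l /andP[Ql Pl]] := exists_line_through2 Q P.
by rewrite (bigD1 l) //= Pl.
Qed.

Lemma leq_bin2 k : k <= 'C(k, 2) + (k < 3).
Proof.
by case: k => [|[|[|k]]] //; rewrite addn0 !binS bin1 !bin0; lia.
Qed.

Definition poor_lines (T : {set pt}) (Q : pt) :=
  [set l : pt | incident Q l & meet_card T l < 3].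

Lemma card_le_secant_mult_poor (T : {set pt}) (Q : pt) :
  #|T| <= secant_mult T Q + #|poor_lines T Q|.
Proof.
apply: leq_trans (card_le_sum_meet_card T Q) _.
have ->: #|poor_lines T Q| = \sum_(l | incident Q l) (meet_card T l < 3).
  rewrite -sum1_card big_mkcond [RHS]big_mkcond; apply: eq_bigr => l _.
  by rewrite inE; case: incident; case: (_ < 3).
by rewrite -big_split; apply: leq_sum => l _; apply: leq_bin2.
Qed.

Lemma card_le_secant_mult (T : {set pt}) (Q : pt) :
  #|T| <= secant_mult T Q + #|F| + 1.
Proof.
apply: leq_trans (card_le_secant_mult_poor T Q) _; rewrite -addnA leq_add2l addn1.
apply: leq_trans (card_lines_through Q); apply: subset_leq_card.
by apply/subsetP => l; rewrite !inE => /andP[].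
Qed.

Lemma card_le_secant_mult_large (T : {set pt}) (Q : pt) :
  2 * #|F| + 3 <= #|T| -> #|T| <= secant_mult T Q + #|F|.
Proof.
move=> T_large; apply: leq_trans (card_le_secant_mult_poor T Q) _.
rewrite leq_add2l -ltnS; apply: leq_trans (card_lines_through Q).
apply: proper_card; apply/properP; split.
  by apply/subsetP => l; rewrite !inE => /andP[].
have /existsP[l /andP[Ql rich]] : [exists l, incident Q l && (3 <= meet_card T l)].
  apply: contraLR T_large; rewrite negb_exists => /forallP poor.
  rewrite -ltnNge; apply: leq_ltn_trans (card_le_sum_meet_card T Q) _.
  apply: (@leq_ltn_trans (\sum_(l | incident Q l) 2)).
    by apply: leq_sum => l Ql; move: (poor l); rewrite Ql -ltnNge.
  rewrite sum_nat_cond_const.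
  by apply: leq_ltn_trans (leq_mul (card_lines_through Q) (leqnn 2)) _; lia.
by exists l; rewrite !inE Ql //= -leqNgt.
Qed.

Lemma secant_mult_notin_le (T : {set pt}) (Q : pt) :
  Q \notin T -> secant_mult T Q <= (#|F| + 1) * 'C(#|F|, 2).
Proof.
move=> QT; apply: (@leq_trans (\sum_(l | incident Q l) 'C(#|F|, 2))).
  by apply: leq_sum => l Ql; apply: leq_bin2l; exact: meet_card_le QT Ql.
by rewrite sum_nat_cond_const addn1 leq_mul2r card_lines_through orbT.
Qed.

Lemma card_plane : #|[set: pt]| <= (#|F| ^ 2 + #|F|).+1.
Proof.
have n1 : normalized (const_mx 1%R : 'rV[F]_3) by rewrite /normalized mxE eqxx.
pose Q : pt := exist (@normalized F) _ n1.
rewrite (cardsD1 Q) inE add1n ltnS.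
apply: leq_trans (card_le_sum_meet_card _ Q) _.
apply: (@leq_trans (\sum_(l | incident Q l) #|F|)).
  by apply: leq_sum => l; apply: (meet_card_le (Q := Q)); rewrite !inE eqxx.
rewrite sum_nat_cond_const.
apply: leq_trans (leq_mul (card_lines_through Q) (leqnn #|F|)) _.
by rewrite mulSn addnC mulnn.
Qed.

Lemma spans_plane_large (T : {set pt}) : #|F| + 2 <= #|T| -> spans_plane T.
Proof.
move=> T_large; apply/negPn/negP => /collinear_of_not_spans [l Tl].
have : #|T| <= #|[set P : pt | incident P l]|.
  by apply/subset_leq_card/subsetP => P PT; rewrite inE Tl.
have := card_points_on_line l; lia.
Qed.

Lemma minimal_saturating_card_le (mu : nat) (S : {set pt}) n :
  minimal_saturating mu S -> #|F| + 2 <= n ->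
  (forall T : {set pt}, n <= #|T| -> forall R, R \notin T -> mu <= secant_mult T R) ->
  #|S| <= n.
Proof.
move=> [[_ S_neqT _] S_min] n_large T_sat; rewrite leqNgt; apply/negP => S_large.
have [P PS] : exists P, P \in S.
  by apply/set0Pn; rewrite -card_gt0; apply: leq_ltn_trans S_large.
have card_SP : #|S :\ P| = #|S|.-1 by rewrite (cardsD1 P S) PS.
apply: (S_min (S :\ P)); first exact: subD1set.
  exact: card_SP.
split.
- by apply: spans_plane_large; rewrite card_SP; lia.
- apply: contraNneq S_neqT => SP_T.
  by rewrite eqEsubset subsetT -SP_T subD1set.
- by move=> R; apply: T_sat; rewrite card_SP; lia.
Qed.

End Plane.

Local Open Scope nat_scope.

Theorem proposition6p1 (F : finFieldType) (mu : nat)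
  (S : {set {v : 'rV[F]_3 | normalized v}}) :
  (0 < mu)%N -> minimal_saturating mu S ->
  (mu <= (#|F| + 1) * 'C(#|F|, 2))%N /\
  ((mu <= #|F| + 2)%N -> (#|S| <= #|F| + mu + 1)%N) /\
  ((#|F| + 3 <= mu)%N -> (#|S| <= minn (#|F| + mu) (#|F| ^ 2 + #|F|))%N).
Proof.
move=> mu_gt0 S_min; have [[_ S_neqT S_sat] _] := S_min.
have S_proper : S \proper setT by rewrite properT.
have /properP[_ [Q _ QS]] := S_proper.
split; first exact: leq_trans (S_sat Q QS) (secant_mult_notin_le QS).
split.
  move=> _; apply: minimal_saturating_card_le S_min _ _ => [|T T_large R _]; first lia.
  by have := card_le_secant_mult T R; lia.
move=> mu_large; rewrite leq_min; apply/andP; split.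
  apply: minimal_saturating_card_le S_min _ _ => [|T T_large R _]; first lia.
  by have := @card_le_secant_mult_large _ T R; lia.
rewrite -ltnS; apply: leq_trans (proper_card S_proper) _.
exact: card_plane.
Qed.
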